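(* Let $G$ be a directed graph with $n$ nodes and $Z$ a zero forcing set of $G$ with $|Z|=m$. Let $\mathcal{C}$ be a set of node-disjoint chains covering $V(G)$ with set of sources $Z$ and $T$ a time function for $\mathcal{C}$ such that $G\in\mathcal{G}^{\mathcal{C},T}$. Then $G=\mathcal{G}^{\mathcal{C},T}_{\mathrm{perf}}$ if and only if $|E(G)|=|E_{\mathrm{perf}}|$, where $E_{\mathrm{perf}}$ is the edge set of $\mathcal{G}^{\mathcal{C},T}_{\mathrm{perf}}$ (equivalently, iff $|E(G)|=\frac12n(n+1)+\frac12m(2n-m-1)$).
   Context: Graphs are directed, self-loops allowed. Zero forcing: with nodes colored black/white, a black node with exactly one white out-neighbor turns it black; $S$ is a zero forcing set if starting from black set $S$ and repeating this rule makes all nodes black. A chain is a directed path graph with source (start node) and sink (end node); for a non-sink $v$, $v+1$ is its out-neighbor. For node-disjoint chains $\mathcal{C}=\{C_1,\ldots,C_m\}$, $V=\bigcup_iV(C_i)$, $\gamma=|V|-m+1$, a time function is $T:V\to\{1,\ldots,\gamma\}$ with (1) $T(v)=1$ for every source; (2) distinct non-source nodes get distinct values; (3) $T(v)<T(v+1)$ for non-sink $v$. $T_{\max}(v)=\gamma$ for a sink $v$, else $T_{\max}(v)=T(v+1)-1$. $\mathcal{G}^{\mathcal{C},T}$ is the set of graphs $G$ with $V(G)=V$, $\bigcup_iE(C_i)\subseteq E(G)$, and $(u,v)\notin E(G)$ whenever $(u,v)\notin\bigcup_iE(C_i)$ and $T_{\max}(u)<T(v)$. $\mathcal{G}^{\mathcal{C},T}_{\mathrm{perf}}$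 has node set $V$ and edge set $E_{\mathrm{perf}}=\bigcup_iE(C_i)\cup\{(u,v)\in V\times V: T_{\max}(u)\geq T(v)\}$. *)

From mathcomp Require Import all_boot.
Set Implicit Arguments. Unset Strict Implicit. Unset Printing Implicit Defensive.

Section ZF.
Variable T : finType.

(* A directed graph on node set T (self-loops allowed) is given by its edge set
   E : {set T * T}; (u, v) \in E means u -> v. *)
Definition out_white (E : {set T * T}) (B : {set T}) (u : T) : {set T} :=
  [set w | ((u, w) \in E) && (w \notin B)].

Inductive zf_reach (E : {set T * T}) (S : {set T}) : {set T} -> Prop :=
  | zf_base : zf_reach E S S
  | zf_step B u w : zf_reach E S B -> u \in B ->
      out_white E B u = [set w] -> zf_reach E S (w |: B).

Definition zero_forcing_set (E : {set T * T}) (S : {set T}) : Prop :=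
  zf_reach E S [set: T].

(* A family of chains is a list of chains, each chain a list of nodes
   [:: v_1; ...; v_k] with edges v_i -> v_{i+1}. *)
Definition chains_cover (C : seq (seq T)) : Prop :=
  [/\ all (fun c => c != [::]) C, uniq (flatten C) & forall v : T, v \in flatten C].

Definition chain_sources (C : seq (seq T)) : {set T} :=
  [set x | has (fun c => ohead c == Some x) C].

Definition chain_edges (C : seq (seq T)) : {set T * T} :=
  [set e | has (fun c => e \in zip c (behead c)) C].

Definition gamma (C : seq (seq T)) : nat := #|T| - size C + 1.

Definition is_time_function (C : seq (seq T)) (tf : T -> nat) : Prop :=
  [/\ forall v, 1 <= tf v <= gamma C,
      forall v, v \in chain_sources C -> tf v = 1,
      forall u v, u \notin chain_sources C -> v \notin chain_sources C ->
                  u != v -> tf u != tf v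
    & forall u v, (u, v) \in chain_edges C -> tf u < tf v].

Definition Tmax (C : seq (seq T)) (tf : T -> nat) (v : T) : nat :=
  match [pick w | (v, w) \in chain_edges C] with
  | Some w => tf w - 1
  | None => gamma C
  end.

Definition in_graph_class (C : seq (seq T)) (tf : T -> nat) (E : {set T * T}) : Prop :=
  chain_edges C \subset E /\
  forall u v, (u, v) \notin chain_edges C -> Tmax C tf u < tf v -> (u, v) \notin E.

Definition E_perf (C : seq (seq T)) (tf : T -> nat) : {set T * T} :=
  chain_edges C :|: [set e | tf e.2 <= Tmax C tf e.1].

End ZF.

From mathcomp Require Import all_boot zify.
Set Implicit Arguments. Unset Strict Implicit. Unset Printing Implicit Defensive.

(* Every edge of a graph in the class G^{C,T} already lies in E_perf, so the
   graph is the perfect one exactly when both edge sets have the same size, and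
   it remains to count E_perf.  Its n - m chain edges are disjoint from the pairs
   (u, v) with T(v) <= T_max(u).  As T is 1 on the m sources and a bijection from
   the non-sources onto {2, ..., gamma}, each u has m + T_max(u) - 1 such v.
   T_max is a bijection from the non-sinks onto {1, ..., gamma - 1} and equals
   gamma on the m sinks; summing gives 2 |E_perf| = n(n+1) + m(2n - m - 1). *)

Lemma uniq_map_inj_in (T1 T2 : eqType) (f : T1 -> T2) (s : seq T1) :
  uniq (map f s) -> {in s &, injective f}.
Proof.
elim: s => //= a s IH /andP [fa_notin Us] x y.
rewrite !in_cons => /predU1P [-> | xs] /predU1P [-> | ys] // E.
- by case/negP: fa_notin; rewrite E map_f.
- by case/negP: fa_notin; rewrite -E map_f.
- exact: IH.
Qed.

Lemma unzip1_zip_take (S1 S2 : Type) (s : seq S1) (t : seq S2) :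
  unzip1 (zip s t) = take (size t) s.
Proof. by elim: s t => [|x s IH] [|y t] //=; rewrite IH. Qed.

Lemma subseq_flatten_map (T0 : eqType) (f : seq T0 -> seq T0) (ss : seq (seq T0)) :
  (forall s, subseq (f s) s) -> subseq (flatten (map f ss)) (flatten ss).
Proof. by move=> sub_f; elim: ss => //= s ss IH; rewrite cat_subseq. Qed.

Lemma perm_flatten_heads (T0 : eqType) (ss : seq (seq T0)) :
  perm_eq (flatten ss) (pmap ohead ss ++ flatten (map behead ss)).
Proof.
elim: ss => //= -[|x s] ss IH //=.
by rewrite perm_cons perm_sym perm_catCA perm_cat2l perm_sym.
Qed.

Lemma big_inj_in_index_iota (T0 : finType) (A : {pred T0}) (f : T0 -> nat)
    (F : nat -> nat) a :
  {in A &, injective f} -> {in A, forall x, a <= f x < a + #|A|} ->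
  \sum_(x in A) F (f x) = \sum_(a <= j < a + #|A|) F j.
Proof.
move=> f_inj f_range; rewrite -big_enum /= -(big_map f xpredT).
apply: perm_big; rewrite /index_iota addKn.
have uniq_img : uniq (map f (enum A)).
  by rewrite map_inj_in_uniq ?enum_uniq // => x y; rewrite !mem_enum; apply: f_inj.
have sub_img : {subset map f (enum A) <= iota a #|A|}.
  by move=> _ /mapP [x + ->]; rewrite mem_enum mem_iota => /f_range.
apply: uniq_perm => //; first exact: iota_uniq.
by apply: (uniq_min_size uniq_img sub_img _).2; rewrite size_map size_iota -cardE.
Qed.

Lemma double_sum_nat n : 2 * \sum_(0 <= j < n.+1) j = n * n.+1.
Proof. by elim: n => [|n IH]; rewrite ?big_nat1 // big_nat_recr //= mulnDr IH; lia. Qed.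

Lemma sum_index_iota_leq a b k : a <= k.+1 <= b ->
  \sum_(a <= j < b) (j <= k) = k.+1 - a.
Proof.
case/andP => ak kb; rewrite (big_cat_nat ak kb) /=.
rewrite (@eq_big_nat _ _ _ a k.+1 _ (fun=> 1)) => [|j /andP [_]]; last first.
  by rewrite ltnS => ->.
rewrite sum_nat_const_nat muln1 big_nat_cond big1 ?addn0 // => j /andP [/andP [kj _] _].
by rewrite leqNgt kj.
Qed.

Lemma sum_setC (T0 : finType) (A : {set T0}) (F : T0 -> nat) :
  \sum_x F x = \sum_(x in A) F x + \sum_(x in ~: A) F x.
Proof.
by rewrite (bigID (mem A)) /=; congr (_ + _); apply: eq_bigl => x; rewrite inE.
Qed.

Section Chains.
Variables (T : finType) (C : seq (seq T)).

Definition chain_edge_seq : seq (T * T) := flatten [seq zip c (behead c) | c <- C].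

Definition chain_sinks : {set T} := [set u | [forall w, (u, w) \notin chain_edges C]].

Lemma non_sink_chain_edge u :
  u \notin chain_sinks -> exists w, (u, w) \in chain_edges C.
Proof. by rewrite inE negb_forall => /existsP [w /negbNE]; exists w. Qed.

Lemma chain_edgesE : chain_edges C = [set e in chain_edge_seq].
Proof. by apply/setP => e; rewrite !inE; apply/hasP/flatten_mapP. Qed.

Lemma chain_sourcesE : chain_sources C = [set x in pmap ohead C].
Proof.
apply/setP => x; rewrite !inE mem_pmap.
apply/hasP/mapP => -[c Cc x_c]; exists c => //; first exact/esym/eqP.
by rewrite x_c.
Qed.

Lemma unzip2_chain_edge_seq : unzip2 chain_edge_seq = flatten (map behead C).
Proof.
rewrite /unzip2 /chain_edge_seq map_flatten -map_comp; congr flatten.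
apply: eq_map => c /=.
by apply: unzip2_zip; rewrite size_behead leq_pred.
Qed.

Lemma subseq_unzip1_chain_edge_seq : subseq (unzip1 chain_edge_seq) (flatten C).
Proof.
rewrite /unzip1 /chain_edge_seq map_flatten -map_comp.
apply: subseq_flatten_map => c /=.
by rewrite -/(unzip1 _) unzip1_zip_take take_subseq.
Qed.

Hypothesis C_cover : chains_cover C.

Let uniq_flatten : uniq (flatten C). Proof. by case: C_cover. Qed.

Let uniq_heads_tails : uniq (pmap ohead C ++ flatten (map behead C)).
Proof. by rewrite -(perm_uniq (perm_flatten_heads C)). Qed.

Let size_heads : size (pmap ohead C) = size C.
Proof.
have [nonempty _ _] := C_cover; rewrite size_pmap; apply/eqP; rewrite -all_count.
by apply/allP => -[|x s] // /(allP nonempty).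
Qed.

Lemma card_chain_sources : #|chain_sources C| = size C.
Proof.
rewrite chain_sourcesE cardsE -size_heads; apply/card_uniqP.
by move: uniq_heads_tails; rewrite cat_uniq => /and3P [].
Qed.

Lemma notin_chain_sources x :
  (x \notin chain_sources C) = (x \in flatten (map behead C)).
Proof.
have [_ _ cover] := C_cover.
move: uniq_heads_tails; rewrite cat_uniq => /and3P [_ disjoint _].
have := perm_mem (perm_flatten_heads C) x.
rewrite cover mem_cat chain_sourcesE inE => /esym x_in.
apply/idP/idP => [/negbTE x_head | x_tail]; first by rewrite x_head in x_in.
apply/negP => x_head.
by case/hasP: disjoint; exists x.
Qed.

Lemma chain_edge_nonsource u w : (u, w) \in chain_edges C -> w \notin chain_sources C.
Proof.
rewrite notin_chain_sources -unzip2_chain_edge_seq chain_edgesE inE.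
exact: (map_f snd).
Qed.

Lemma nonsource_chain_edge w :
  w \notin chain_sources C -> exists u, (u, w) \in chain_edges C.
Proof.
rewrite notin_chain_sources -unzip2_chain_edge_seq => /mapP [[u w'] e_in ->].
by exists u; rewrite chain_edgesE inE.
Qed.

Let uniq_snd : uniq (unzip2 chain_edge_seq).
Proof.
by move: uniq_heads_tails; rewrite -unzip2_chain_edge_seq cat_uniq => /and3P [].
Qed.

Let uniq_fst : uniq (unzip1 chain_edge_seq).
Proof. exact: subseq_uniq subseq_unzip1_chain_edge_seq uniq_flatten. Qed.

Lemma chain_pred_unique u u' w :
  (u, w) \in chain_edges C -> (u', w) \in chain_edges C -> u = u'.
Proof.
by rewrite chain_edgesE !inE => e1 e2; case: (uniq_map_inj_in uniq_snd e1 e2 erefl).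
Qed.

Lemma chain_succ_unique u w w' :
  (u, w) \in chain_edges C -> (u, w') \in chain_edges C -> w = w'.
Proof.
by rewrite chain_edgesE !inE => e1 e2; case: (uniq_map_inj_in uniq_fst e1 e2 erefl).
Qed.

Let card_chain_edge_seq : #|chain_edges C| = size chain_edge_seq.
Proof. by rewrite chain_edgesE cardsE; apply/card_uniqP/(map_uniq uniq_snd). Qed.

Lemma card_chain_edges : #|chain_edges C| = #|T| - size C.
Proof.
have [_ _ cover] := C_cover.
have size_flatten : size (flatten C) = #|T|.
  rewrite cardT; apply/perm_size/uniq_perm; rewrite ?enum_uniq // => x.
  by rewrite mem_enum cover.
rewrite card_chain_edge_seq -(size_map snd) -/(unzip2 _) unzip2_chain_edge_seq.
by rewrite -size_flatten (perm_size (perm_flatten_heads C)) size_cat size_heads addKn.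
Qed.

Lemma card_chain_sinks : #|chain_sinks| = size C.
Proof.
have non_sinksE : ~: chain_sinks = [set u in unzip1 chain_edge_seq].
  apply/setP => u; rewrite !inE negb_forall.
  apply/existsP/mapP => [[w] | [[u' w] e_in ->]].
    by rewrite negbK chain_edgesE inE => e_in; exists (u, w).
  by exists w; rewrite negbK chain_edgesE inE.
have card_non_sinks : #|~: chain_sinks| = #|T| - size C.
  rewrite non_sinksE cardsE (card_uniqP uniq_fst) size_map.
  by rewrite -card_chain_edge_seq card_chain_edges.
have := cardsC chain_sinks; have := max_card (chain_sources C).
by rewrite card_non_sinks card_chain_sources; lia.
Qed.
End Chains.

Section TimeFunction.
Variables (T : finType) (C : seq (seq T)) (tf : T -> nat).
Hypotheses (C_cover : chains_cover C) (tf_time : is_time_function C tf).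

Local Notation S := (chain_sources C).
Local Notation CE := (chain_edges C).
Local Notation Tmax := (Tmax C tf).

Let size_chains_le : size C <= #|T|.
Proof. by rewrite -card_chain_sources // max_card. Qed.

Let card_nonsources : #|~: S| = #|T| - size C.
Proof. by rewrite cardsCs setCK card_chain_sources. Qed.

Lemma time_nonsource w : w \notin S -> 2 <= tf w <= gamma C.
Proof.
case: tf_time => tf_range _ _ tf_incr /(nonsource_chain_edge C_cover) [u uw].
by have := tf_incr _ _ uw; have := tf_range u; have := tf_range w; lia.
Qed.

Lemma time_inj : {in ~: S &, injective tf}.
Proof.
case: tf_time => _ _ tf_neq _ u v; rewrite !in_setC => uS vS tf_uv.
by apply/eqP/(contraTT (tf_neq _ _ uS vS)); rewrite tf_uv.
Qed.

Lemma Tmax_succ u w : (u, w) \in CE -> Tmax u = tf w - 1.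
Proof.
move=> uw; rewrite /Tmax.
by case: pickP => [w' /(chain_succ_unique C_cover uw) -> | /(_ w)]; rewrite ?uw.
Qed.

Lemma Tmax_sink u : u \in chain_sinks C -> Tmax u = gamma C.
Proof.
rewrite inE /Tmax => /forallP no_succ.
by case: pickP => // w; rewrite (negbTE (no_succ w)).
Qed.

Lemma Tmax_non_sink u : u \notin chain_sinks C -> 1 <= Tmax u < gamma C.
Proof.
case/non_sink_chain_edge => w uw; rewrite (Tmax_succ uw).
by have := time_nonsource (chain_edge_nonsource C_cover uw); lia.
Qed.

Lemma Tmax_bounds u : 1 <= Tmax u <= gamma C.
Proof.
have [/Tmax_sink -> | /Tmax_non_sink] := boolP (u \in chain_sinks C); last lia.
by rewrite /gamma; lia.
Qed.

Lemma Tmax_inj : {in ~: chain_sinks C &, injective Tmax}.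
Proof.
move=> u u'; rewrite !in_setC.
move=> /non_sink_chain_edge [w uw] /non_sink_chain_edge [w' uw'].
have [wS w'S] := (chain_edge_nonsource C_cover uw, chain_edge_nonsource C_cover uw').
have := time_nonsource wS; have := time_nonsource w'S.
rewrite (Tmax_succ uw) (Tmax_succ uw') => w_range w'_range Tmax_eq.
have w_eq : w = w' by apply: time_inj; rewrite ?in_setC //; lia.
by rewrite w_eq in uw; exact: (chain_pred_unique C_cover uw uw').
Qed.

Lemma count_time_le k : 1 <= k <= gamma C -> \sum_v (tf v <= k) = size C + k.-1.
Proof.
move=> k_range; rewrite (sum_setC S); congr (_ + _).
  rewrite -card_chain_sources // -sum1_card; apply: eq_bigr => v vS.
  by case: tf_time => _ -> //; move: k_range => /andP [->].
rewrite (big_inj_in_index_iota (fun j => j <= k) (a := 2) time_inj); last first.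
  by move=> v; rewrite in_setC => /time_nonsource; rewrite card_nonsources /gamma; lia.
by rewrite card_nonsources sum_index_iota_leq; move: k_range; rewrite /gamma; lia.
Qed.

Lemma sum_Tmax : \sum_u Tmax u = \sum_(0 <= j < gamma C) j + size C * gamma C.
Proof.
rewrite (sum_setC (chain_sinks C)) addnC; congr (_ + _); last first.
  by rewrite (eq_bigr _ (fun u => Tmax_sink (u := u))) sum_nat_const card_chain_sinks.
have card_non_sinks : #|~: chain_sinks C| = #|T| - size C.
  by rewrite cardsCs setCK card_chain_sinks.
rewrite (big_inj_in_index_iota (fun j => j) (a := 1) Tmax_inj); last first.
  by move=> u; rewrite in_setC => /Tmax_non_sink; rewrite card_non_sinks /gamma; lia.
by rewrite card_non_sinks [in RHS]big_ltn /gamma ?addn1.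
Qed.

Lemma card_E_perf :
  2 * #|E_perf C tf| = #|T| * (#|T| + 1) + size C * (2 * #|T| - size C - 1).
Proof.
set P := [set e : T * T | tf e.2 <= Tmax e.1].
have CE_P : CE :&: P = set0.
  apply/setP => -[u w]; rewrite in_setI in_set0 [_ \in P]inE /=.
  apply/negP => /andP [uw].
  have := time_nonsource (chain_edge_nonsource C_cover uw).
  by rewrite (Tmax_succ uw); lia.
have card_P : #|P| = \sum_u (size C + (Tmax u).-1).
  have -> : #|P| = \sum_u \sum_v (tf v <= Tmax u).
    rewrite -sum1_card big_mkcond pair_big /=.
    by apply: eq_bigr => -[u v] _; rewrite inE; case: leqP.
  by apply: eq_bigr => u _; rewrite count_time_le ?Tmax_bounds.
have card_P_T : #|P| + #|T| = #|T| * size C + \sum_u Tmax u.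
  rewrite -[in LHS](muln1 #|T|) -!sum_nat_const card_P -!big_split /=.
  by apply: eq_bigr => u _; have := Tmax_bounds u; lia.
have := double_sum_nat (#|T| - size C).
rewrite /E_perf cardsU CE_P cards0 subn0 card_chain_edges // -/P.
move: card_P_T; rewrite sum_Tmax /gamma addn1.
by move: (\sum_(0 <= j < _) j) #|P| => gauss p; nia.
Qed.
End TimeFunction.

Lemma graph_class_sub_E_perf (T : finType) (C : seq (seq T)) (tf : T -> nat)
    (E : {set T * T}) :
  in_graph_class C tf E -> E \subset E_perf C tf.
Proof.
case=> _ no_edge; apply/subsetP => -[u v] uv.
rewrite in_setU [X in _ || X]inE /=.
have [// | not_CE] := boolP ((u, v) \in chain_edges C).
by rewrite leqNgt (contraL (no_edge u v not_CE) uv).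
Qed.

Theorem corollary1 (T : finType) (E : {set T * T}) (Z : {set T})
    (C : seq (seq T)) (tf : T -> nat) :
  zero_forcing_set E Z ->
  chains_cover C ->
  chain_sources C = Z ->
  is_time_function C tf ->
  in_graph_class C tf E ->
  (E = E_perf C tf <-> #|E| = #|E_perf C tf|) /\
  (E = E_perf C tf <->
     2 * #|E| = #|T| * (#|T| + 1) + #|Z| * (2 * #|T| - #|Z| - 1)).
Proof.
move=> _ C_cover <- tf_time /graph_class_sub_E_perf E_sub.
have E_perf_card : E = E_perf C tf <-> #|E| = #|E_perf C tf|.
  by split=> [-> // | card_eq]; apply/eqP; rewrite eqEcard E_sub card_eq leqnn.
split=> //; rewrite E_perf_card card_chain_sources //.
rewrite -(card_E_perf C_cover tf_time).
by split=> [-> | /eqP]; rewrite ?eqn_pmul2l // => /eqP.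
Qed.
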